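(* Let $t<k\le n$ and $\lambda$ be positive integers. If there exist a Steiner system S$(t,k,n)$ and a perpendicular array PA$_\lambda(k,n,n)$, then there exists a large set with multiplicity LS$(t,k,n;\mu)$, where $\mu=\lambda\binom{n}{t}\big/\binom{k}{t}$.
   Context: A Steiner system S$(t,k,n)$ is a pair $(Q,B)$ where $Q$ is an $n$-set and $B$ is a collection of $k$-subsets (blocks) of $Q$ such that every $t$-subset of $Q$ is contained in exactly one block. A large set with multiplicity $\mu$, LS$(t,k,n;\mu)$, is a family (the same system may occur more than once) of Steiner systems S$(t,k,n)$ on a common $n$-set $Q$ such that every $k$-subset of $Q$ is a block of exactly $\mu$ of the systems. A perpendicular array PA$_\lambda(k,\ell,n)$ is a $\lambda\binom{n}{k}\times \ell$ matrix with entries from an $n$-set such that each row has $\ell$ distinct entries and, in the submatrix formed by any $k$ columns, each $k$-subset of the $n$-set occurs (as the set of entries of a row) exactly $\lambda$ times; for $\ell=n$ its rows are permutations of the $n$-set. *)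

From mathcomp Require Import all_boot.
Unset Printing Implicit Defensive.

Definition steiner_system (t k n : nat) (B : {set {set 'I_n}}) : Prop :=
  (forall b, b \in B -> #|b| = k) /\
  (forall T : {set 'I_n}, #|T| = t -> exists! b, b \in B /\ T \subset b).

(* Large set with multiplicity mu: a family (list, repetitions allowed) of
   Steiner systems S(t,k,n) on 'I_n, every k-subset being a block of exactly
   mu members of the family (counted with multiplicity). *)
Definition large_set (t k n mu : nat) (F : seq {set {set 'I_n}}) : Prop :=
  (forall B : {set {set 'I_n}}, B \in F -> steiner_system t k n B) /\
  (forall K : {set 'I_n}, #|K| = k -> count (fun B : {set {set 'I_n}} => K \in B) F = mu).

(* Perpendicular array PA_lambda(k,l,n): a (lambda * C(n,k)) x l matrix with
   entries in 'I_n, given as the list of its rows (row r has entry r j in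
   column j); rows have distinct entries, and for every set C of k columns,
   every k-subset S of 'I_n is the set of entries of exactly lambda rows
   restricted to C. *)
Definition perpendicular_array (lambda k l n : nat)
    (M : seq {ffun 'I_l -> 'I_n}) : Prop :=
  size M = lambda * 'C(n, k) /\
  (forall r : {ffun 'I_l -> 'I_n}, r \in M -> injective r) /\
  (forall (C : {set 'I_l}) (S : {set 'I_n}), #|C| = k -> #|S| = k ->
     count (fun r : {ffun 'I_l -> 'I_n} => r @: C == S) M = lambda).

From mathcomp Require Import all_boot.

(* Every row r of the perpendicular array is a permutation of 'I_n, and
   relabelling the Steiner system B by r gives again a Steiner system r(B).
   Since r is injective, a k-set K is a block of r(B) exactly when r maps one
   block b of B onto K; perpendicularity, applied to the column set b, says
   that exactly lambda rows map b onto K.  Hence K is a block of exactly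
   lambda |B| of the systems r(B), and |B| = C(n,t) / C(k,t) by double
   counting the pairs (t-set, block containing it). *)

Lemma count_sum_nat (T : Type) (a : pred T) (s : seq T) :
  count a s = \sum_(x <- s) a x.
Proof. by rewrite -sum1_count big_mkcond. Qed.

Lemma sum_eq_imset_inj {aT rT : finType} {f : aT -> rT}
    (A : {pred aT}) (y : rT) :
  injective f -> \sum_(x in A) (f x == y) = (y \in f @: A).
Proof.
move=> inj_f; have [[x0 Ax0 ->]|notAy] := imsetP.
  rewrite (bigD1 x0) //= eqxx big1 // => x /andP[_ neq_x].
  by rewrite (inj_eq inj_f) (negbTE neq_x).
rewrite big1 // => x Ax; case: eqP => // fx_y.
by case: notAy; exists x.
Qed.

Lemma sum_subset_blocks {T : finType} (t : nat) {k : nat} {B : {set {set T}}} :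
  (forall b, b \in B -> #|b| = k) ->
  \sum_(S : {set T} | #|S| == t) \sum_(b in B) (S \subset b) = #|B| * 'C(k, t).
Proof.
move=> card_B; rewrite exchange_big /= -sum_nat_const.
apply: eq_bigr => b /card_B <-; rewrite -cards_draws -sum1_card.
rewrite big_mkcond [RHS]big_mkcond /=; apply: eq_bigr => S _; rewrite inE.
by case: (S \subset b); case: (#|S| == t).
Qed.

Lemma steiner_system_card {t k n : nat} {B : {set {set 'I_n}}} :
  steiner_system t k n B -> #|B| * 'C(k, t) = 'C(n, t).
Proof.
case=> card_B unique_block; rewrite -(sum_subset_blocks t card_B).
rewrite -[n in 'C(n, t)]card_ord -card_draws -sum1dep_card.
apply: eq_bigr => S /eqP /unique_block [b0 [[Bb0 Sb0] b0_unique]].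
rewrite (bigD1 b0) //= Sb0 big1 // => b /andP[Bb neq_b].
by case: (boolP (S \subset b)) => // Sb; rewrite (b0_unique b) ?eqxx in neq_b.
Qed.

Definition relabel {aT rT : finType} (f : aT -> rT) (B : {set {set aT}}) :
  {set {set rT}} := [set f @: b | b : {set aT} in B].

Lemma steiner_system_relabel (t k n : nat) (f : 'I_n -> 'I_n) B :
  injective f -> steiner_system t k n B -> steiner_system t k n (relabel f B).
Proof.
move=> inj_f [card_B unique_block]; have [g fK gK] := injF_bij inj_f.
have sub_relabel (S b : {set 'I_n}) : (S \subset f @: b) = (g @: S \subset b).
  by rewrite (can2_imset_pre b fK gK) sub_imset_pre.
split=> [_ /imsetP[b Bb ->]|S card_S]; first by rewrite card_imset // card_B.
have card_gS : #|g @: S| = t by rewrite card_imset //; apply: can_inj gK.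
have [b [[Bb Sb] b_unique]] := unique_block _ card_gS.
exists (f @: b); split=> [|_ [/imsetP[b' Bb' ->]]].
  by rewrite imset_f // sub_relabel.
by rewrite sub_relabel => gSb'; rewrite (b_unique b').
Qed.

Lemma count_mem_relabel {aT rT : finType} (B : {set {set aT}})
    {M : seq {ffun aT -> rT}} (K : {set rT}) :
  (forall r, r \in M -> injective r) ->
  count (fun r : {ffun aT -> rT} => K \in relabel r B) M =
    \sum_(b in B) count (fun r : {ffun aT -> rT} => r @: b == K) M.
Proof.
move=> inj_M; rewrite count_sum_nat big_seq.
under eq_bigr => r /inj_M inj_r do
  rewrite -(sum_eq_imset_inj _ _ (imset_inj inj_r)).
by rewrite -big_seq exchange_big; apply: eq_bigr => b _; rewrite count_sum_nat.
Qed.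

Theorem theorem8 (t k n lambda : nat) :
  0 < t -> t < k -> k <= n -> 0 < lambda ->
  (exists B : {set {set 'I_n}}, steiner_system t k n B) ->
  (exists M : seq {ffun 'I_n -> 'I_n}, perpendicular_array lambda k n n M) ->
  exists F : seq {set {set 'I_n}},
    large_set t k n (lambda * 'C(n, t) %/ 'C(k, t)) F.
Proof.
move=> _ lt_tk _ _ [B steinerB] [M [_ [inj_M perp_M]]].
have -> : lambda * 'C(n, t) %/ 'C(k, t) = lambda * #|B|.
  by rewrite -(steiner_system_card steinerB) mulnA mulnK // bin_gt0 ltnW.
exists [seq relabel r B | r : {ffun 'I_n -> 'I_n} <- M]; split.
  by move=> _ /mapP[r /inj_M inj_r ->]; exact: steiner_system_relabel.
move=> K card_K.
have [card_B _] := steinerB.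
rewrite count_map (count_mem_relabel _ _ inj_M).
under eq_bigr => b Bb do rewrite (perp_M _ _ (card_B b Bb) card_K).
by rewrite sum_nat_const mulnC.
Qed.
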